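(* For integers $M\ge L>N\ge1$, every configuration of the four-vertex model on the $L\times M$ grid with scalar-product boundary conditions has exactly $(L-N)(M-N)$ vertices of type $a$, $N(M-L+N)$ vertices of type $b$ and $2N(L-N)$ vertices of type $c$. Consequently the weighted partition function $\sum_{\text{conf}}a^{\#a}b^{\#b}c^{\#c}$ equals $a^{(L-N)(M-N)}b^{N(M-L+N)}c^{2N(L-N)}Z_{L,M,N}$, with $Z_{L,M,N}$ the number of configurations.
   Context: Four-vertex model: on the grid of vertices $(n,m)$, $1\le n\le L$, $1\le m\le M$, every edge (including boundary edges sticking out of the rectangle) is thick or thin, such that at every vertex the four incident edges form one of four allowed local configurations: type $a$: all thin; type $b$: both vertical edges thick, both horizontal thin; type $c$ (two kinds): south and east thick, west and north thin; or west and north thick, south and east thin. Scalar-product boundary conditions: the south boundary vertical edges in columns $1,\dots,N$ and the north boundary vertical edges in columns $L-N+1,\dots,L$ are thick; all other boundary edges are thin. $\#a,\#b,\#c$ denote the numbers of vertices of each type in a configuration. *)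

From mathcomp Require Import all_boot all_order all_algebra.
Set Implicit Arguments. Unset Strict Implicit. Unset Printing Implicit Defensive.
Import GRing.Theory.

(* Four-vertex model on the L x M grid (columns i = 0..L-1 stand for n = i+1,
   rows j = 0..M-1 stand for m = j+1).
   Vertical edges: vert (i, k), k = 0..M, is the vertical edge in column i just
   south of row k (so k = 0 is the south boundary edge, k = M the north one).
   Horizontal edges: horz (k, j), k = 0..L, is the horizontal edge in row j just
   west of column k (k = 0 west boundary, k = L east boundary).
   true = thick, false = thin. *)
Definition config (L M : nat) : finType :=
  ({ffun 'I_L * 'I_M.+1 -> bool} * {ffun 'I_L.+1 * 'I_M -> bool})%type.

Section FourVertex.
Variables (L M N : nat).
Implicit Types (c : config L M) (i : 'I_L) (j : 'I_M).

Definition eS c i j : bool := c.1 (i, inord j).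
Definition eN c i j : bool := c.1 (i, inord j.+1).
Definition eW c i j : bool := c.2 (inord i, j).
Definition eE c i j : bool := c.2 (inord i.+1, j).

Definition is_a c i j : bool := [&& ~~ eS c i j, ~~ eN c i j, ~~ eW c i j & ~~ eE c i j].
Definition is_b c i j : bool := [&& eS c i j, eN c i j, ~~ eW c i j & ~~ eE c i j].
Definition is_c1 c i j : bool := [&& eS c i j, eE c i j, ~~ eW c i j & ~~ eN c i j].
Definition is_c2 c i j : bool := [&& eW c i j, eN c i j, ~~ eS c i j & ~~ eE c i j].
Definition is_c c i j : bool := is_c1 c i j || is_c2 c i j.

(* scalar-product boundary conditions: south edges thick exactly in columns
   1..N, north edges thick exactly in columns L-N+1..L, horizontal boundary
   edges thin *)
Definition valid c : bool :=
  [&& [forall i, forall j, [|| is_a c i j, is_b c i j, is_c1 c i j | is_c2 c i j]],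
      [forall i, c.1 (i, ord0) == (i < N)],
      [forall i, c.1 (i, ord_max) == (L - N <= i)],
      [forall j, ~~ c.2 (ord0, j)] &
      [forall j, ~~ c.2 (ord_max, j)]].

Definition numA c : nat := #|[set p : 'I_L * 'I_M | is_a c p.1 p.2]|.
Definition numB c : nat := #|[set p : 'I_L * 'I_M | is_b c p.1 p.2]|.
Definition numC c : nat := #|[set p : 'I_L * 'I_M | is_c c p.1 p.2]|.

Definition Zcount : nat := #|[set c : config L M | valid c]|.

Definition partfun (R : comNzRingType) (a b cw : R) : R :=
  \sum_(c : config L M | valid c) (a ^+ numA c * b ^+ numB c * cw ^+ numC c).

End FourVertex.

From mathcomp Require Import all_boot all_order all_algebra zify.
Import GRing.Theory.
Local Open Scope ring_scope.

(* Encode the thickness of every edge as 0/1.  At each vertex the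
   four allowed configurations give three local identities: a + b + c = 1,
   c = (thick horizontal edges), 2b + c = (thick vertical edges), plus line
   conservation  south + west = north + east.  Summing them over the grid
   expresses #a + #b + #c, #c and 2#b + #c through the total numbers of thick
   horizontal and vertical edge-incidences, which are fixed by the boundary:
   - conservation along a row shows that every horizontal cut carries exactly
     N thick vertical edges, so vertical incidences total 2MN;
   - a centre-of-mass (summation by parts) argument shows that the thick
     horizontal edges measure the total eastward shift of the lines, which go
     from columns 1..N to columns L-N+1..L: N(L-N) edges, 2N(L-N) incidences. *)

Section WeightedSums.
Context {V : zmodType}.
Implicit Types (f g : nat -> V).

Lemma sum_index_differences f K :
  \sum_(k < K) (f k.+1 - f k) *+ k = f K *+ K - \sum_(k < K) f k.+1.
Proof.
elim: K => [|K IH]; first by rewrite !big_ord0 mulr0n subr0.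
rewrite !big_ord_recr /= IH mulrnBl addrC addrA subrK.
by rewrite mulrSr opprD addrACA subrr addr0.
Qed.

Lemma sum_first_indices N L g : (N <= L)%N ->
  \sum_(i < L) g i *+ (i < N)%N = \sum_(t < N) g t.
Proof.
move=> leNL; rewrite (big_ord_widen _ g leNL) [RHS]big_mkcond.
by apply: eq_bigr => i _; case: ifP.
Qed.

Lemma sum_last_indices N L g : (N <= L)%N ->
  \sum_(i < L) g i *+ (L - N <= i)%N = \sum_(t < N) g (t + (L - N))%N.
Proof.
move=> leNL; rewrite -(big_mkord xpredT (fun i => g i *+ (L - N <= i)%N)).
rewrite (big_cat_nat _ (n := (L - N)%N)) ?leq_subr //= big_nat_cond big1 ?add0r.
  rewrite -{1}(add0n (L - N)%N) big_addn subKn // big_mkord.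
  by apply: eq_bigr => i _; rewrite leq_addl.
by move=> i /andP[/andP[_ ltiLN] _]; rewrite leqNgt ltiLN.
Qed.

Lemma sum_last_minus_first N L g : (N <= L)%N ->
  \sum_(i < L) (g i *+ (L - N <= i)%N - g i *+ (i < N)%N)
  = \sum_(t < N) (g (t + (L - N))%N - g t).
Proof. by move=> leNL; rewrite !sumrB sum_last_indices ?sum_first_indices. Qed.

End WeightedSums.

Lemma natz_mulrn (m n : nat) : (m : int) *+ n = (n * m)%N.
Proof. by rewrite -natz -mulrnA natz mulnC. Qed.

Lemma card_vertices_sum {L M : nat} (P : 'I_L -> 'I_M -> bool) :
  (#|[set p : 'I_L * 'I_M | P p.1 p.2]| : int)
  = \sum_(i < L) \sum_(j < M) (P i j : int).
Proof.
rewrite -sum1_card (big_morph Posz PoszD (erefl _)) pair_big /= big_mkcond.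
by apply: eq_bigr => p _; rewrite inE; case: (P _ _).
Qed.

Section ValidConfiguration.
Variables (L M N : nat) (c : config L M).
Hypothesis c_valid : valid N c.
Hypothesis leNL : (N <= L)%N.
Implicit Types (i : 'I_L) (j : 'I_M).

Definition vert (i : 'I_L) (k : nat) : int := c.1 (i, inord k).
Definition horz (k : nat) (j : 'I_M) : int := c.2 (inord k, j).

Lemma vertex_rules i j :
  [/\ (is_a c i j : int) + (is_b c i j : int) + (is_c c i j : int) = 1,
      (is_c c i j : int) = horz i j + horz i.+1 j,
      (is_b c i j : int) + (is_b c i j : int) + (is_c c i j : int)
      = vert i j + vert i j.+1
    & vert i j + horz i j = vert i j.+1 + horz i.+1 j].
Proof.
move/and5P: c_valid => [/forallP/(_ i)/forallP/(_ j) + _ _ _ _].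
rewrite /vert /horz /is_c /is_a /is_b /is_c1 /is_c2 /eS /eN /eW /eE.
by case: (c.1 _) (c.1 _) (c.2 _) (c.2 _) => [] [] [] [].
Qed.

Lemma boundary_rules :
  [/\ forall i, vert i 0 = (i < N)%N :> int,
      forall i, vert i M = (L - N <= i)%N :> int,
      forall j, horz 0 j = 0
    & forall j, horz L j = 0].
Proof.
move/and5P: c_valid => [_ /forallP south /forallP north /forallP west /forallP east].
rewrite /vert /horz; split=> [i|i|j|j].
- by rewrite (inord_val ord0) (eqP (south i)).
- by rewrite (inord_val ord_max) (eqP (north i)).
- by rewrite (inord_val ord0) (negbTE (west j)).
- by rewrite (inord_val ord_max) (negbTE (east j)).
Qed.

Lemma row_horizontal_shift j : \sum_(i < L) horz i.+1 j = \sum_(i < L) horz i j.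
Proof.
have [_ _ west east] := boundary_rules.
apply/eqP; rewrite -subr_eq0 -sumrB -(big_mkord xpredT (fun k => horz k.+1 j - horz k j)).
by rewrite telescope_sumr // west east subrr.
Qed.

Lemma vertex_conservation i j :
  vert i j.+1 - vert i j = horz i j - horz i.+1 j.
Proof.
have [_ _ _ balance] := vertex_rules i j.
by apply/eqP; rewrite subr_eq addrC addrA balance addrK.
Qed.

Lemma row_flux j : \sum_(i < L) vert i j.+1 = \sum_(i < L) vert i j.
Proof.
apply/eqP; rewrite -subr_eq0 -sumrB (eq_bigr _ (fun i _ => vertex_conservation i j)).
by rewrite sumrB row_horizontal_shift subrr.
Qed.

Lemma cut_flux k : (k <= M)%N -> \sum_(i < L) vert i k = N.
Proof.
have [south _ _ _] := boundary_rules.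
elim: k => [_|k IH ltkM].
  under eq_bigr => i _ do rewrite south -natz.
  by rewrite (@sum_first_indices _ N L (fun _ => 1)) // sumr_const card_ord natz.
by rewrite (row_flux (Ordinal ltkM)) IH // ltnW.
Qed.

(* Summing the cut fluxes over the M rows: the south (resp. north) vertical
   edges of all vertices contain M * N thick edges in total. *)
Lemma vertical_totals :
  \sum_(i < L) \sum_(j < M) vert i j = (M * N)%N
  /\ \sum_(i < L) \sum_(j < M) vert i j.+1 = (M * N)%N.
Proof.
have total_cuts (s : nat) : (s <= 1)%N ->
    \sum_(i < L) \sum_(j < M) vert i (j + s) = (M * N)%N.
  move=> le_s1; rewrite exchange_big /= (eq_bigr (fun _ => N%:Z)) => [|j _].
    by rewrite sumr_const card_ord natz_mulrn.
  by apply: cut_flux; have := ltn_ord j; lia.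
split; [rewrite -(total_cuts 0 isT) | rewrite -(total_cuts 1 isT)];
  by apply: eq_bigr => i _; apply: eq_bigr => j _; rewrite ?addn0 ?addn1.
Qed.

(* Centre-of-mass argument: in row j, the thick horizontal edges east of the
   vertices count how far the thick lines are shifted east, i.e. the increase
   of the sum of the column indices of thick vertical edges. Summed over rows,
   lines entering in columns 0..N-1 exit in columns L-N..L-1, a total shift of
   N * (L - N). *)
Lemma horizontal_total :
  \sum_(j < M) \sum_(i < L) horz i.+1 j = (N * (L - N))%N.
Proof.
have [south north _ east] := boundary_rules.
have row_shift j :
    \sum_(i < L) horz i.+1 j = \sum_(i < L) (vert i j.+1 - vert i j) *+ i.
  have := sum_index_differences (fun k => horz k j) L.
  rewrite east mul0rn sub0r => /(congr1 -%R); rewrite opprK => <-.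
  rewrite -sumrN; apply: eq_bigr => i _.
  by rewrite vertex_conservation -mulNrn opprB.
rewrite (eq_bigr _ (fun j _ => row_shift j)) exchange_big /=.
transitivity (\sum_(i < L) ((i : int) *+ (L - N <= i)%N - (i : int) *+ (i < N)%N)).
  apply: eq_bigr => i _; rewrite sumrMnl -(big_mkord xpredT (fun k => vert i k.+1 - vert i k)).
  rewrite telescope_sumr // north south mulrnBl.
  by congr (_ - _); case: (_ <= _)%N; rewrite ?mul0rn ?mulr0n ?mulr1n ?natz.
rewrite (@sum_last_minus_first _ N L (fun n => n : int)) //.
rewrite (eq_bigr (fun _ => (L - N)%N : int)) => [|t _]; last by rewrite PoszD addrC addKr.
by rewrite sumr_const card_ord natz_mulrn.
Qed.

(* The three linear relations between the numbers of vertices of each type: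
   every vertex has one type; every thick horizontal edge is seen by two
   vertices, both of type c; every thick vertical edge is seen by two vertices,
   of type b (two such edges) or c (one such edge). *)
Lemma vertex_count_relations :
  [/\ numA c + numB c + numC c = L * M,
      numC c = N * (L - N) + N * (L - N)
    & numB c + numB c + numC c = M * N + M * N]%N.
Proof.
have sum_rule (F G : 'I_L -> 'I_M -> int) : (forall i j, F i j = G i j) ->
    \sum_(i < L) \sum_(j < M) F i j = \sum_(i < L) \sum_(j < M) G i j.
  by move=> FG; apply: eq_bigr => i _; apply: eq_bigr => j _.
have [vert_south vert_north] := vertical_totals.
have cardA := card_vertices_sum (is_a c).
have cardB := card_vertices_sum (is_b c).
have cardC := card_vertices_sum (is_c c).
split; apply/eqP; rewrite -eqz_nat !PoszD /numA /numB /numC; apply/eqP.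
- rewrite cardA cardB cardC -!big_split /=.
  under eq_bigr => i _ do rewrite -!big_split /=.
  rewrite (sum_rule _ (fun _ _ => 1)) => [|i j]; last by case: (vertex_rules i j).
  rewrite (eq_bigr (fun _ => M%:Z)) => [|i _]; last by rewrite sumr_const card_ord natz.
  by rewrite sumr_const card_ord natz_mulrn.
- rewrite cardC (sum_rule _ (fun i j => horz i j + horz i.+1 j)) => [|i j]; last by case: (vertex_rules i j).
  under eq_bigr => i _ do rewrite big_split.
  rewrite big_split /= [X in X + _]exchange_big [X in _ + X]exchange_big /=.
  rewrite (eq_bigr _ (fun j _ => esym (row_horizontal_shift j))).
  by rewrite horizontal_total.
- rewrite cardB cardC -!big_split /=.
  under eq_bigr => i _ do rewrite -!big_split /=.
  rewrite (sum_rule _ (fun i j => vert i j + vert i j.+1)) => [|i j]; last by case: (vertex_rules i j).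
  under eq_bigr => i _ do rewrite big_split.
  by rewrite big_split /= vert_south vert_north.
Qed.
End ValidConfiguration.

Lemma vertex_counts L M N (c : config L M) :
  (N <= L)%N -> (L <= M)%N -> valid N c ->
  [/\ numA c = ((L - N) * (M - N))%N,
      numB c = (N * (M - L + N))%N
    & numC c = (2 * N * (L - N))%N].
Proof.
move=> leNL leLM c_valid.
have [sum_rel c_rel b_rel] := @vertex_count_relations _ _ _ _ c_valid leNL.
move: (numA c) (numB c) (numC c) sum_rel c_rel b_rel => A B C.
have [x eqL] : exists x, L = (N + x)%N by exists (L - N)%N; rewrite subnKC.
have [y eqM] : exists y, M = (L + y)%N by exists (M - L)%N; rewrite subnKC.
rewrite eqM eqL !addKn -(addnA N x y) addKn.
move=> sum_eq C_eq B_eq; split; nia.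
Qed.

Lemma partfun_constant_counts L M N (R : comNzRingType) (a b cw : R) (p q r : nat) :
  (forall c : config L M, valid N c -> [/\ numA c = p, numB c = q & numC c = r]) ->
  @partfun L M N R a b cw = a ^+ p * b ^+ q * cw ^+ r * (Zcount L M N)%:R.
Proof.
move=> counts; rewrite /partfun (eq_bigr (fun _ => a ^+ p * b ^+ q * cw ^+ r)).
  by rewrite sumr_const /Zcount cardsE mulr_natr.
by move=> c /counts [-> -> ->].
Qed.

Theorem mainTheorem4 (L M N : nat) :
  (1 <= N)%N -> (N < L)%N -> (L <= M)%N ->
  (forall c : config L M, @valid L M N c ->
     [/\ numA c = ((L - N) * (M - N))%N,
         numB c = (N * (M - L + N))%N &
         numC c = (2 * N * (L - N))%N]) /\
  (forall (R : comNzRingType) (a b cw : R),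
     @partfun L M N R a b cw =
     a ^+ ((L - N) * (M - N)) * b ^+ (N * (M - L + N)) * cw ^+ (2 * N * (L - N))
       * (Zcount L M N)%:R).
Proof.
move=> _ ltNL leLM.
have counts (c : config L M) := @vertex_counts L M N c (ltnW ltNL) leLM.
by split=> // R a b cw; apply: partfun_constant_counts.
Qed.
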